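(* Let $\pi$ be a model with observation space $Y$ and parameter space $\Theta$, let $Y'$ be a space and $t:Y\to Y'$ a measurable function, and write $t^{-1}(y')=\{y\in Y: t(y)=y'\}$. Let $\pi'$ be the model with parameter space $\Theta$ and observation space $Y'$ given by $\pi'_{\text{prior}}(\theta)=\pi_{\text{prior}}(\theta)$ and $\pi'_{\text{obs}}(y'\mid\theta)=\int_{t^{-1}(y')}\pi_{\text{obs}}(y\mid\theta)\,\mathrm{d}y$ for all $\theta\in\Theta$, $y'\in Y'$. Let $f'$ be a test quantity for $\pi'$ and $\phi'$ a posterior family for $\pi'$ such that $\phi'$ passes continuous SBC (for model $\pi'$) with respect to $f'$. Define the test quantity $f(\theta,y)=f'(\theta,t(y))$ and the posterior family $\phi(\theta\mid y)=\phi'(\theta\mid t(y))$ on $\Theta$, $Y$. Then $\phi$ passes continuous SBC (for model $\pi$) with respect to $f$.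
   Context: A model on data space $Y$ and parameter space $\Theta$ is given by a prior density $\pi_{\text{prior}}(\theta)$ and observation density $\pi_{\text{obs}}(y\mid\theta)$; $\pi_{\text{marg}}(y)=\int_\Theta\pi_{\text{obs}}(y\mid\theta)\pi_{\text{prior}}(\theta)\,\mathrm{d}\theta$ and $\pi_{\text{post}}(\theta\mid y)=\pi_{\text{obs}}(y\mid\theta)\pi_{\text{prior}}(\theta)/\pi_{\text{marg}}(y)$. A posterior family is $\phi:\Theta\times Y\to\mathbb{R}^+$ with $\int_\Theta\phi(\theta\mid y)\,\mathrm{d}\theta=1$ for all $y$; a test quantity is a measurable $f:\Theta\times Y\to\mathbb{R}$. For a given model: $C_{\phi,f}(s\mid y)=\int_\Theta\mathbb{I}[f(\theta,y)\le s]\phi(\theta\mid y)\,\mathrm{d}\theta$, $D_{\phi,f}(s\mid y)=\int_\Theta\mathbb{I}[f(\theta,y)=s]\phi(\theta\mid y)\,\mathrm{d}\theta$; with $U\sim\mathrm{uniform}[0,1]$, $r_{\phi,f}(x\mid\tilde\theta,y)=\Pr\big(C_{\phi,f}(f(\tilde\theta,y)\mid y)-U\,D_{\phi,f}(f(\tilde\theta,y)\mid y)\le x\big)$, $q_{\phi,f}(x\mid y)=\int_\Theta\pi_{\text{post}}(\tilde\theta\mid y)r_{\phi,f}(x\mid\tilde\theta,y)\,\mathrm{d}\tilde\theta$. $\phi$ passes continuous SBC w.r.t. $f$ if $\int_Yq_{\phi,f}(x\mid y)\pi_{\text{marg}}(y)\,\mathrm{d}y=x$ for all $x\in[0,1]$.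 *)

From HB Require Import structures.
From mathcomp Require Import all_boot all_order all_algebra.
From mathcomp Require Import all_classical all_reals all_analysis.
Set Implicit Arguments. Unset Strict Implicit. Unset Printing Implicit Defensive.
Import Order.TTheory GRing.Theory Num.Theory.
Local Open Scope classical_set_scope.
Local Open Scope ring_scope.

(* Conventions: parameter space T (= Theta) with base measure muT, data space
   Y with base measure muY.  [obs th y] = pi_obs(y | th), [prior th] =
   pi_prior(th), [phi th y] = phi(th | y), [f th y] = f(th, y). *)

Section SBC.
Context {R : realType} {dT dY : measure_display}
  {T : measurableType dT} {Y : measurableType dY}.
Variables (muT : {measure set T -> \bar R}) (muY : {measure set Y -> \bar R}).

Definition is_model (prior : T -> R) (obs : T -> Y -> R) : Prop :=
  [/\ (forall th, 0 <= prior th),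
      measurable_fun setT prior
    & (\int[muT]_th (prior th)%:E = 1)%E] /\
  [/\ (forall th y, 0 <= obs th y),
      measurable_fun setT (fun z : T * Y => obs z.1 z.2)
    & forall th, (\int[muY]_y (obs th y)%:E = 1)%E].

Definition is_posterior_family (phi : T -> Y -> R) : Prop :=
  [/\ (forall th y, 0 <= phi th y),
      measurable_fun setT (fun z : T * Y => phi z.1 z.2)
    & forall y, (\int[muT]_th (phi th y)%:E = 1)%E].

Definition is_test_quantity (f : T -> Y -> R) : Prop :=
  measurable_fun setT (fun z : T * Y => f z.1 z.2).

Definition marg (prior : T -> R) (obs : T -> Y -> R) (y : Y) : \bar R :=
  \int[muT]_th (obs th y * prior th)%:E.

(* pi_post(th | y) (x / 0 = 0 convention where pi_marg(y) = 0) *)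
Definition post (prior : T -> R) (obs : T -> Y -> R) (th : T) (y : Y) : R :=
  obs th y * prior th / fine (marg prior obs y).

Definition Cfun (phi : T -> Y -> R) (f : T -> Y -> R) (s : R) (y : Y) : R :=
  fine (\int[muT]_(th in [set th | f th y <= s]) (phi th y)%:E).

Definition Dfun (phi : T -> Y -> R) (f : T -> Y -> R) (s : R) (y : Y) : R :=
  fine (\int[muT]_(th in [set th | f th y = s]) (phi th y)%:E).

(* r(x | th~, y) = Pr(C - U D <= x), U ~ uniform[0,1] *)
Definition rfun (phi : T -> Y -> R) (f : T -> Y -> R) (x : R) (tht : T) (y : Y)
  : \bar R :=
  (@lebesgue_measure R)
    [set u : R | 0 <= u <= 1 /\
       Cfun phi f (f tht y) y - u * Dfun phi f (f tht y) y <= x].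

Definition qfun (prior : T -> R) (obs : T -> Y -> R)
  (phi : T -> Y -> R) (f : T -> Y -> R) (x : R) (y : Y) : \bar R :=
  \int[muT]_tht ((post prior obs tht y)%:E * rfun phi f x tht y).

Definition passes_SBC (prior : T -> R) (obs : T -> Y -> R)
  (phi : T -> Y -> R) (f : T -> Y -> R) : Prop :=
  forall x : R, 0 <= x <= 1 ->
    (\int[muY]_y (qfun prior obs phi f x y * marg prior obs y) = x%:E)%E.

End SBC.

From HB Require Import structures.
From mathcomp Require Import all_boot all_order all_algebra.
From mathcomp Require Import all_classical all_reals all_analysis.
From mathcomp Require Import measurable_realfun.
Import Order.TTheory GRing.Theory Num.Theory.
Local Open Scope classical_set_scope.
Local Open Scope ring_scope.

(* Write r(x|th, y') for the rank probability of phi' and f'; the rank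
   probability of phi and f at (th, y) is then r(x|th, t(y)).  Since
   pi_post * pi_marg = pi_obs * pi_prior away from a pi_marg-null set, the SBC
   integral of phi equals
     int_Theta pi_prior(th) int_Y pi_obs(y|th) r(x|th, t(y)) dy dth.
   As pi'_obs(.|th) is the density of the image of pi_obs(.|th) dy under t,
   the inner integral is int_Y' pi'_obs(y'|th) r(x|th, y') dy', which turns
   the whole expression into the SBC integral of phi' for pi', equal to x.
   The change of variables, given for indicators, extends to every nonnegative
   measurable g by writing g(y') as the Lebesgue measure of the section at y'
   of the region under the graph of g and applying Tonelli. *)

Lemma lebesgue_measure_below {R : realType} (g : \bar R) : (0 <= g)%E ->
  (@lebesgue_measure R) [set u : R | 0 <= u /\ (u%:E < g)%E] = g.
Proof.
case: g => [r|_|//]; last first.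
  rewrite (_ : [set _ | _] = [set` `[0%R, +oo[]); last first.
    by apply/seteqP; split => u; rewrite /= in_itv /= ltry andbT; [case|].
  by rewrite lebesgue_measure_itv /= ltry.
rewrite lee_fin => r0; rewrite (_ : [set _ | _] = [set` `[0%R, r[]); last first.
  by apply/seteqP; split => u; rewrite /= in_itv /= lte_fin => /andP.
rewrite lebesgue_measure_itv /= lte_fin sube0.
by rewrite lt_neqAle r0 andbT; case: eqP => // <-.
Qed.

Section integral_lebesgue_xsection.
Local Open Scope ereal_scope.
Context {R : realType} {dX dY : measure_display}
  {X : measurableType dX} {Y : measurableType dY}.
Variables (mu : {sigma_finite_measure set X -> \bar R}) (s : X -> Y) (w : X -> R).
Hypotheses (ms : measurable_fun setT s) (mw : measurable_fun setT w).
Hypothesis w_ge0 : forall x, (0 <= w x)%R.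

Lemma integral_lebesgue_xsection (S : set (Y * R)) : measurable S ->
  \int[mu]_x ((w x)%:E * (@lebesgue_measure R) (xsection S (s x)))
  = \int[lebesgue_measure]_u \int[mu]_x ((w x)%:E * (\1_(ysection S u) (s x))%:E).
Proof.
move=> mS; have mI : measurable_fun setT (\1_S : _ -> R) by exact: measurable_indic.
pose F (z : X * measurableTypeR R) := (w z.1)%:E * (\1_S (s z.1, z.2))%:E.
transitivity (\int[mu]_x \int[lebesgue_measure]_u F (x, u)).
  apply: eq_integral => x _.
  rewrite -[in LHS](setIT (xsection S _)) -integral_indic; last exact: measurable_xsection.
  rewrite -ge0_integralZl ?lee_fin //.
  - by apply: eq_integral => u _; rewrite /F !indicE /xsection /= mem_setE.
  - exact/measurable_EFinP/measurable_indic/measurable_xsection.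
  - exact: measurableT.
rewrite (fubini_tonelli F) /=.
- apply: eq_integral => u _; apply: eq_integral => x _.
  by rewrite /F !indicE /ysection /= mem_setE.
- apply: emeasurable_funM; apply/measurable_EFinP.
    exact: measurableT_comp mw measurable_fst.
  apply: (measurableT_comp mI); apply: measurable_fun_pair => //.
  exact: measurableT_comp ms measurable_fst.
- by move=> z; rewrite mule_ge0 // lee_fin.
Qed.

End integral_lebesgue_xsection.

Section pushforward_density.
Local Open Scope ereal_scope.
Context {R : realType} {dY dY' : measure_display}
  {Y : measurableType dY} {Y' : measurableType dY'}.
Variables (muY : {sigma_finite_measure set Y -> \bar R})
  (muY' : {sigma_finite_measure set Y' -> \bar R}).
Variables (t : Y -> Y') (d : Y -> R) (d' : Y' -> R).
Hypothesis mt : measurable_fun setT t.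
Hypotheses (md : measurable_fun setT d) (md' : measurable_fun setT d').
Hypotheses (d_ge0 : forall y, (0 <= d y)%R) (d'_ge0 : forall y', (0 <= d' y')%R).
Hypothesis d'_pushforward : forall B, measurable B ->
  \int[muY']_(y' in B) (d' y')%:E = \int[muY]_(y in t @^-1` B) (d y)%:E.

Let indic_pushforward (B : set Y') : measurable B ->
  \int[muY]_y ((d y)%:E * (\1_B (t y))%:E) = \int[muY']_y' ((d' y')%:E * (\1_B y')%:E).
Proof.
move=> mB; have patch_indic (T : Type) (D : set T) (h : T -> R) x :
    (h x)%:E * (\1_D x)%:E = ((EFin \o h) \_ D) x.
  by rewrite patchE indicE; case: ifP; rewrite ?mule1 ?mule0.
under eq_integral do rewrite (patch_indic _ (t @^-1` B) d).
under [RHS]eq_integral do rewrite patch_indic.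
by rewrite -!integral_mkcond d'_pushforward.
Qed.

Lemma ge0_integral_pushforward_density (g : Y' -> \bar R) :
  measurable_fun setT g -> (forall y', 0 <= g y') ->
  \int[muY]_y ((d y)%:E * g (t y)) = \int[muY']_y' ((d' y')%:E * g y').
Proof.
move=> mg g_ge0; pose S := [set p : Y' * R | (0 <= p.2)%R /\ p.2%:E < g p.1].
have mS : measurable S.
  apply: measurableI; rewrite -[X in measurable X]setTI.
    by apply: measurable_fun_le => //; exact: measurable_snd.
  apply: measurable_lte => //; last exact: measurableT_comp mg measurable_fst.
  by apply/measurable_EFinP; exact: measurable_snd.
have gE y' : g y' = lebesgue_measure (xsection S y').
  rewrite -[LHS]lebesgue_measure_below //; congr lebesgue_measure.
  by apply/seteqP; split => u; rewrite /xsection /= in_setE.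
under eq_integral do rewrite gE.
under [RHS]eq_integral do rewrite gE.
rewrite (integral_lebesgue_xsection _ _ _ mt md d_ge0 _ mS).
rewrite (integral_lebesgue_xsection _ _ _ (@measurable_id _ _ setT) md' d'_ge0 _ mS).
by apply: eq_integral => u _; apply: indic_pushforward; exact: measurable_ysection.
Qed.

End pushforward_density.

Section posterior_marginal.
Local Open Scope ereal_scope.
Context {R : realType} {dT dY : measure_display}
  {T : measurableType dT} {Y : measurableType dY}.
Variables (muT : {sigma_finite_measure set T -> \bar R})
  (muY : {sigma_finite_measure set Y -> \bar R}).
Variables (prior : T -> R) (obs : T -> Y -> R).
Hypothesis model : is_model muT muY prior obs.

Local Notation marg := (marg muT prior obs).
Local Notation post := (post muT prior obs).

Let prior_ge0 th : (0 <= prior th)%R. Proof. by case: model => [[]]. Qed.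
Let measurable_prior : measurable_fun setT prior. Proof. by case: model => [[]]. Qed.
Let obs_ge0 th y : (0 <= obs th y)%R. Proof. by case: model => _ []. Qed.
Let measurable_obs : measurable_fun setT (fun z : T * Y => obs z.1 z.2).
Proof. by case: model => _ []. Qed.

Let joint (z : Y * T) : \bar R := (obs z.2 z.1 * prior z.2)%:E.

Let joint_ge0 z : 0 <= joint z. Proof. by rewrite lee_fin mulr_ge0. Qed.

Let measurable_joint : measurable_fun setT joint.
Proof.
apply/measurable_EFinP; apply: measurable_funM.
  exact: measurableT_comp measurable_obs (@measurable_swap _ _ Y T).
exact: measurableT_comp measurable_prior measurable_snd.
Qed.

Let marg_ge0 y : 0 <= marg y.
Proof. by apply: integral_ge0 => th _; exact: (joint_ge0 (y, th)). Qed.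

Let measurable_marg : measurable_fun setT marg.
Proof. exact: measurable_fun_fubini_tonelli_F measurable_joint joint_ge0. Qed.

Lemma integral_marg : \int[muY]_y marg y = 1.
Proof.
case: model => [[_ _ prior1] [_ _ obs1]].
rewrite (fubini_tonelli joint) //= -prior1; apply: eq_integral => th _.
under eq_integral do rewrite /joint /= EFinM muleC.
rewrite ge0_integralZl_EFin //; first by rewrite obs1 mule1.
- by move=> y _; rewrite lee_fin.
- exact/measurable_EFinP/(measurable_fun_pair2 th measurable_obs).
Qed.

Lemma marg_pinfty_null : muY [set y | marg y = +oo] = 0.
Proof.
have mN : measurable [set y | marg y = +oo].
  by rewrite -[X in measurable X]setTI; apply: (measurable_marg measurableT [set +oo]).
have fin_ae : {ae muY, forall y, setT y -> marg y \is a fin_num}.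
  apply: integrable_ae => //; apply/integrableP; split => //.
  rewrite (_ : \int[muY]_y `|marg y| = 1) ?ltry // -integral_marg.
  by apply: eq_integral => y _; rewrite gee0_abs ?marg_ge0.
apply/negligibleP => //; apply: negligibleS fin_ae => y /= -> /(_ I) /fin_numP [] //.
Qed.

Section bounded_integrand.
Variable r : T -> Y -> \bar R.
Hypothesis r01 : forall th y, 0 <= r th y <= 1.
Hypothesis mr : measurable_fun setT (fun z : T * Y => r z.1 z.2).

Let measurable_joint_r : measurable_fun setT (fun z : Y * T => joint z * r z.2 z.1).
Proof.
apply: emeasurable_funM => //.
exact: measurableT_comp mr (@measurable_swap _ _ Y T).
Qed.

Lemma post_marg_mul y : marg y \is a fin_num ->
  (\int[muT]_th ((post th y)%:E * r th y)) * marg y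
  = \int[muT]_th (joint (y, th) * r th y).
Proof.
move=> /fineK mE; set c := fine (marg y) in mE *.
have r_ge0 th : 0 <= r th y by case/andP: (r01 th y).
have [c0|c0] := eqVneq c 0%R.
  (* x / 0 = 0 kills the posterior, and 0 <= r <= 1 bounds the right-hand
     side by marg y = 0. *)
  under eq_integral do rewrite /post -/c c0 invr0 mulr0 mul0e.
  rewrite integral0 mul0e; apply/esym/eqP; rewrite eq_le integral_ge0 ?andbT; last first.
    by move=> th _; rewrite mule_ge0.
  apply: (@le_trans _ _ (marg y)); last by rewrite -mE c0.
  apply: ge0_le_integral => //.
  - by move=> th _; rewrite mule_ge0.
  - exact: measurable_fun_pair2 y measurable_joint_r.
  - exact: measurable_fun_pair2 y measurable_joint.
  - by move=> th _; rewrite -[leRHS]mule1 lee_wpmul2l //; case/andP: (r01 th y).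
rewrite -mE -ge0_integralZr //.
- by apply: eq_integral => th _; rewrite muleAC -EFinM /post -/c divfK.
- apply: emeasurable_funM; last exact: measurable_fun_pair1 y mr.
  apply/measurable_EFinP; apply: measurable_funM => //.
  apply: measurable_funM => //; exact: measurable_fun_pair1 y measurable_obs.
- by move=> th _; rewrite mule_ge0 // lee_fin divr_ge0 ?mulr_ge0 ?fine_ge0 ?marg_ge0.
- by rewrite mE marg_ge0.
Qed.

Lemma integral_post_marg :
  \int[muY]_y ((\int[muT]_th ((post th y)%:E * r th y)) * marg y)
  = \int[muT]_th ((prior th)%:E * \int[muY]_y ((obs th y)%:E * r th y)).
Proof.
have r_ge0 th y : 0 <= r th y by case/andP: (r01 th y).
transitivity (\int[muY]_y \int[muT]_th (joint (y, th) * r th y)).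
  rewrite [RHS](ge0_negligible_integral _ _ _ _ marg_pinfty_null) //; last 3 first.
  - by rewrite -[X in measurable X]setTI; apply: (measurable_marg measurableT [set +oo]).
  - by apply: (measurable_fun_fubini_tonelli_F _ measurable_joint_r) => z; rewrite mule_ge0.
  - by move=> y _; apply: integral_ge0 => th _; rewrite mule_ge0.
  rewrite integral_mkcond; apply: eq_integral => y _; rewrite patchE.
  (* where marg y = +oo the posterior is 0 as well, since fine +oo = 0 *)
  have [my|my] := eqVneq (marg y) +oo.
    rewrite memNset; last by case.
    under eq_integral do rewrite /post my invr0 mulr0 mul0e.
    by rewrite integral0 mul0e.
  rewrite mem_set; last by split => //=; apply/eqP.
  by apply: post_marg_mul; rewrite ge0_fin_numE // ltey.
rewrite (fubini_tonelli (fun z => joint z * r z.2 z.1)) //=; last first.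
  by move=> z; rewrite mule_ge0.
apply: eq_integral => th _; rewrite -ge0_integralZl //.
- by apply: eq_integral => y _; rewrite /joint /= EFinM muleAC muleC.
- apply: emeasurable_funM; last exact: measurable_fun_pair2 th mr.
  exact/measurable_EFinP/(measurable_fun_pair2 th measurable_obs).
- by move=> y _; rewrite mule_ge0 // lee_fin.
- by rewrite lee_fin.
Qed.

End bounded_integrand.
End posterior_marginal.

Section measurable_integral_section.
Local Open Scope ereal_scope.
Context {R : realType} {dX dT : measure_display}
  {X : measurableType dX} {T : measurableType dT}.
Variable mu : {sigma_finite_measure set T -> \bar R}.

Lemma measurable_fun_integral_section (A : set (X * T)) (h : X * T -> \bar R) :
  measurable A -> measurable_fun setT h -> (forall z, 0 <= h z) ->
  measurable_fun setT (fun x => \int[mu]_(th in [set th | A (x, th)]) h (x, th)).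
Proof.
move=> mA mh h_ge0.
have -> : (fun x => \int[mu]_(th in [set th | A (x, th)]) h (x, th))
    = fubini_F mu (h \_ A).
  by apply/funext => x; rewrite integral_mkcond; apply: eq_integral => th _; rewrite !patchE.
apply: measurable_fun_fubini_tonelli_F.
  exact/(measurable_restrictT _ mA)/measurable_funTS.
by move=> z; rewrite patchE; case: ifP.
Qed.

End measurable_integral_section.

Lemma lebesgue_rank_le1 {R : realType} (c d x : R) :
  ((@lebesgue_measure R) [set u : R | (0 <= u <= 1)%R /\ (c - u * d <= x)%R] <= 1)%E.
Proof.
rewrite (_ : [set u | _] = [set` `[0%R, 1%R]] `&` [set u | c - u * d <= x]); last first.
  by apply/seteqP; split => u; rewrite /= in_itv.
have -> : 1%E = (@lebesgue_measure R) [set` `[0%R, 1%R]].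
  by rewrite lebesgue_measure_itv /= lte01 sube0.
apply: le_measure; rewrite ?inE; last exact: subIsetl.
- apply: measurable_fun_le => //.
  by apply: measurable_funB => //; exact: measurable_funM.
- exact: measurable_itv.
Qed.

Lemma measurable_fun_lebesgue_rank {R : realType} {dZ : measure_display}
    {Z : measurableType dZ} (a b : Z -> R) (x : R) :
  measurable_fun setT a -> measurable_fun setT b ->
  measurable_fun setT
    (fun z => (@lebesgue_measure R) [set u : R | 0 <= u <= 1 /\ a z - u * b z <= x]).
Proof.
move=> ma mb; pose S := (setT `*` [set` `[0%R, 1%R]]) `&`
  [set p : Z * R | a p.1 - p.2 * b p.1 <= x].
have mS : measurable S.
  apply: measurable_fun_le => //.
  - by apply: measurableX => //; exact: measurable_itv.
  - apply: measurable_funTS; apply: measurable_funB; first exact: measurableT_comp ma measurable_fst.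
    apply: measurable_funM; first exact: measurable_snd.
    exact: measurableT_comp mb measurable_fst.
rewrite (_ : (fun z => _) = lebesgue_measure \o xsection S).
  exact: measurable_fun_xsection.
apply/funext => z; congr lebesgue_measure; apply/seteqP; split => u;
  by rewrite /xsection /S /= in_setE /= in_itv /=; tauto.
Qed.

Section measurable_rfun.
Local Open Scope ereal_scope.
Context {R : realType} {dT dY : measure_display}
  {T : measurableType dT} {Y : measurableType dY}.
Variable muT : {sigma_finite_measure set T -> \bar R}.
Variables (phi f : T -> Y -> R).
Hypothesis phi_ge0 : forall th y, (0 <= phi th y)%R.
Hypothesis mphi : measurable_fun setT (fun z : T * Y => phi z.1 z.2).
Hypothesis mf : measurable_fun setT (fun z : T * Y => f z.1 z.2).

Let th_y (q : (R * Y) * T) : T * Y := (q.2, q.1.2).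

Let measurable_th_y : measurable_fun setT th_y.
Proof.
apply: measurable_fun_pair; first exact: measurable_snd.
exact: measurableT_comp measurable_snd measurable_fst.
Qed.

Let measurable_phi_th_y : measurable_fun setT (fun q : (R * Y) * T => (phi q.2 q.1.2)%:E).
Proof. by apply/measurable_EFinP; exact: measurableT_comp mphi measurable_th_y. Qed.

Let measurable_f_th_y : measurable_fun setT (fun q : (R * Y) * T => f q.2 q.1.2).
Proof. exact: measurableT_comp mf measurable_th_y. Qed.

Let measurable_threshold : measurable_fun setT (fun q : (R * Y) * T => q.1.1).
Proof. exact: measurableT_comp measurable_fst measurable_fst. Qed.

Lemma measurable_Cfun : measurable_fun setT (fun p : R * Y => Cfun muT phi f p.1 p.2).
Proof.
have mA : measurable [set q : (R * Y) * T | (f q.2 q.1.2 <= q.1.1)%R].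
  by rewrite -[X in measurable X]setTI; apply: measurable_fun_le.
apply: measurableT_comp (fine_measurable measurableT) _.
by apply: (measurable_fun_integral_section _ _ _ mA measurable_phi_th_y) => q; rewrite lee_fin.
Qed.

Lemma measurable_Dfun : measurable_fun setT (fun p : R * Y => Dfun muT phi f p.1 p.2).
Proof.
have mA : measurable [set q : (R * Y) * T | f q.2 q.1.2 = q.1.1].
  rewrite (_ : [set q | _] = setT `&` [set q | (f q.2 q.1.2)%:E = (q.1.1)%:E]).
    by apply: measurable_eqe => //; exact/measurable_EFinP.
  by apply/seteqP; split => q /=; [move=> ->|case=> _ []].
apply: measurableT_comp (fine_measurable measurableT) _.
by apply: (measurable_fun_integral_section _ _ _ mA measurable_phi_th_y) => q; rewrite lee_fin.
Qed.

Lemma measurable_rfun x :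
  measurable_fun setT (fun z : T * Y => rfun muT phi f x z.1 z.2).
Proof.
have mfy : measurable_fun setT (fun z : T * Y => (f z.1 z.2, z.2)).
  by apply: measurable_fun_pair => //; exact: measurable_snd.
apply: measurable_fun_lebesgue_rank.
  exact: measurableT_comp measurable_Cfun mfy.
exact: measurableT_comp measurable_Dfun mfy.
Qed.

End measurable_rfun.

Theorem theorem7 (R : realType) (dT dY dY' : measure_display)
  (T : measurableType dT) (Y : measurableType dY) (Y' : measurableType dY')
  (muT : {sigma_finite_measure set T -> \bar R})
  (muY : {sigma_finite_measure set Y -> \bar R})
  (muY' : {sigma_finite_measure set Y' -> \bar R})
  (prior : T -> R) (obs : T -> Y -> R)
  (t : Y -> Y') (obs' : T -> Y' -> R)
  (f' : T -> Y' -> R) (phi' : T -> Y' -> R) :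
  is_model muT muY prior obs ->
  measurable_fun setT t ->
  (* pi'_obs(y'|th) = int_{t^-1(y')} pi_obs(y|th) dy, i.e. obs'(.|th) is the
     density of the pushforward of pi_obs(.|th) dy under t *)
  (forall th y', 0 <= obs' th y') ->
  measurable_fun setT (fun z : T * Y' => obs' z.1 z.2) ->
  (forall th (B : set Y'), measurable B ->
     (\int[muY']_(y' in B) (obs' th y')%:E
        = \int[muY]_(y in t @^-1` B) (obs th y)%:E)%E) ->
  is_test_quantity f' ->
  is_posterior_family muT phi' ->
  passes_SBC muT muY' prior obs' phi' f' ->
  passes_SBC muT muY prior obs (fun th y => phi' th (t y)) (fun th y => f' th (t y)).
Proof.
move=> model mt obs'_ge0 mobs' obs'_push mf' [phi'_ge0 mphi' _] sbc' x x01.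
have model' : is_model muT muY' prior obs'.
  case: model => prior_density [_ _ obs1]; split => //; split => // th.
  by rewrite obs'_push // preimage_setT obs1.
pose r' th y' := rfun muT phi' f' x th y'.
have r'01 th y' : (0 <= r' th y' <= 1)%E by rewrite measure_ge0 lebesgue_rank_le1.
have mr' : measurable_fun setT (fun z : T * Y' => r' z.1 z.2).
  exact: measurable_rfun.
have mtt : measurable_fun setT (fun z : T * Y => (z.1, t z.2)).
  exact: measurable_fun_pair measurable_fst (measurableT_comp mt measurable_snd).
have mr := measurableT_comp mr' mtt.
rewrite -(sbc' x x01) /qfun (integral_post_marg _ _ _ _ model' _ r'01 mr').
(* by conversion, the rank probability of the composed family at y is r' at t y *)
transitivity (\int[muT]_th ((prior th)%:E * \int[muY]_y ((obs th y)%:E * r' th (t y))))%E.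
  exact: (integral_post_marg _ _ _ _ model (fun th y => r' th (t y)) (fun th y => r'01 th (t y)) mr).
apply: eq_integral => th _; congr (_ * _)%E; case: model => _ [obs_ge0 mobs _].
apply: ge0_integral_pushforward_density => //.
- exact: measurable_fun_pair2 th mobs.
- exact: measurable_fun_pair2 th mobs'.
- exact: obs'_push.
- exact: measurable_fun_pair2 th mr'.
Qed.
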